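(* Suppose we have $2$ agents with additive, normalized valuations, provided with predictions of accuracy $\eta<1-\frac{1-a}{\min\{6a,4\}}$ for some given $a\in(\frac12,1]$, that is, the allowed error between the predictions and the true valuations is $1-\eta>\frac{1-a}{\min\{6a,4\}}$. Then there is no online algorithm that guarantees an $a$-EFX allocation for all instances whose errors are at most $1-\eta$, even when $T'=T=4$ and the predictions and the true valuations are $4$-value functions.
   Context: Online fair division with predictions: agents $N=[n]$; goods $g_1,\dots,g_T$ arrive one per time step. Each agent $i$ has a true additive normalized valuation $v_i$ ($v_i(g_t)\ge0$, $\sum_{t\in[T]}v_i(g_t)=1$, $v_i(S)=\sum_{g\in S}v_i(g)$) and, before any arrival, the algorithm receives a prediction $p_i=(p_i(g_1),\dots,p_i(g_{T'}))$ for each agent (an additive normalized valuation over $T'$ predicted goods) together with the accuracy level. Error $d_i=\frac12\sum_{t=1}^{\max\{T,T'\}}|p_i(g_t)-v_i(g_t)|$ (missing entries set to $0$), accuracy $\eta_i=1-d_i$; accuracy $\eta$ means $d_i\le 1-\eta$ for all $i$. At time $t$ the true values $v_i(g_t)$ are revealed and $g_t$ must be irrevocably allocated. For $S\ne\emptyset$ and valuation $f$, $\bar S^f=S\setminus\{g\}$ with $g\in\arg\max_{g'\in S}f(S\setminus\{g'\})$, $\bar\emptyset^f=\emptyset$. An allocation is $a$-EFX if $v_i(A_i)\ge a\cdot v_i(\bar{A_j}^{v_i})$ for all $i,j$. A function is $k$-value if it takes at most $k$ distinct values. *)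

From mathcomp Require Import all_boot all_order all_algebra.
Set Implicit Arguments. Unset Strict Implicit. Unset Printing Implicit Defensive.
Import Order.TTheory GRing.Theory Num.Theory.
Local Open Scope ring_scope.

Definition val (R : realFieldType) (G : finType) (f : G -> R) (S : {set G}) : R :=
  \sum_(g in S) f g.

Definition normalized (R : realFieldType) (G : finType) (f : G -> R) : Prop :=
  (forall g, 0 <= f g) /\ \sum_(g : G) f g = 1.

Definition k_value (R : realFieldType) (G : finType) (k : nat) (f : G -> R) : Prop :=
  (size (undup [seq f g | g <- enum G]) <= k)%N.

(* Error d = 1/2 * sum_t |p(g_t) - v(g_t)| (same goods for T = T'). *)
Definition error (R : realFieldType) (G : finType) (p v : G -> R) : R :=
  2^-1 * \sum_(g : G) `|p g - v g|.

Definition sbar (R : realFieldType) (G : finType) (f : G -> R) (S : {set G}) : {set G} :=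
  match [pick g in S] with
  | Some g0 => S :\ [arg max_(g > g0 in S) val f (S :\ g)]%O
  | None => set0
  end.

Definition aEFX (R : realFieldType) (N G : finType) (a : R)
    (v : N -> G -> R) (A : N -> {set G}) : Prop :=
  forall i j, val (v i) (A i) >= a * val (v i) (sbar (v i) (A j)).

(* Setting of the theorem: 2 agents, T = T' = 4 goods g_1..g_4 (indices 0..3). *)
Notation agent := 'I_2.
Notation good := 'I_4.

(* A deterministic online algorithm (for the fixed accuracy level eta):
   alg p t v = agent receiving good t, given predictions p and the true
   valuations v; it must be causal, i.e. only depend on v(g_s) for s <= t. *)
Definition online_alg (R : realFieldType) :=
  (agent -> good -> R) -> good -> (agent -> good -> R) -> agent.

Definition causal (R : realFieldType) (alg : online_alg R) : Prop :=
  forall p (t : good) (v v' : agent -> good -> R), (forall (i : agent) (g : good), (g <= t)%N -> v i g = v' i g) ->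
    alg p t v = alg p t v'.

Definition alloc (R : realFieldType) (alg : online_alg R) p v (i : agent) : {set good} :=
  [set g | alg p g v == i].

Definition admissible (R : realFieldType) (eta : R) (p v : agent -> good -> R) : Prop :=
  forall i, [/\ normalized (p i), normalized (v i), k_value 4 (p i), k_value 4 (v i)
              & error (p i) (v i) <= 1 - eta].

From Pilot Require Import Defs.
From mathcomp Require Import all_boot all_order all_algebra.
From mathcomp Require Import lra.
Set Implicit Arguments. Unset Strict Implicit. Unset Printing Implicit Defensive.
Import Order.TTheory GRing.Theory Num.Theory.
Local Open Scope ring_scope.

(** An adaptive adversary fixes everyone's value of g1 in advance, fixes the
    value of g2 once it sees who received g1, and the values of g3, g4 once it
    sees who received g2; causality pins down the algorithm's first two choices.
    Every allocation of the resulting instance has an agent i and a good g in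
    some bundle A_j with v_i(A_i) <= r * v_i(A_j \ g) for a ratio r < a.  For
    a <= 2/3 the instances are perturbations of size d in [1/12, 1/6] with
    r = 1/(1 + 6d); for a > 2/3 they are perturbations of size d in (0, 1/12]
    with r = 1 - 4d.  Both prediction errors equal d, and r < a exactly when
    d > (1 - a) / min(6a, 4), so d fits within the error budget 1 - eta. *)

Section EFX.
Variables (R : realFieldType) (N G : finType).

Lemma val_setD1_le_sbar (f : G -> R) (S : {set G}) g :
  g \in S -> Defs.val f (S :\ g) <= Defs.val f (sbar f S).
Proof.
move=> gS; rewrite /sbar; case: pickP => [g0 g0S|]; last by move/(_ g); rewrite gS.
by case: (arg_maxP (fun g => Defs.val f (S :\ g)) g0S) => g1 _; apply.
Qed.

Definition EFX_ratio_le (r : R) (v : N -> G -> R) (A : N -> {set G}) : Prop :=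
  exists i j g, [/\ g \in A j, 0 < Defs.val (v i) (A j :\ g)
                  & Defs.val (v i) (A i) <= r * Defs.val (v i) (A j :\ g)].

Lemma not_aEFX_of_EFX_ratio_le (a r : R) v A :
  0 <= r -> r < a -> EFX_ratio_le r v A -> ~ aEFX a v A.
Proof.
move=> r_ge0 r_lt_a [i [j [g [gAj pos le_r]]]] /(_ i j).
apply/negP; rewrite -ltNge.
apply: (le_lt_trans le_r); apply: (lt_le_trans (y := a * Defs.val (v i) (A j :\ g))).
  by rewrite ltr_pM2r.
by rewrite ler_wpM2l ?val_setD1_le_sbar //; apply: (le_trans r_ge0 (ltW r_lt_a)).
Qed.

Lemma k_value_card (f : G -> R) : k_value #|G| f.
Proof. by rewrite /k_value (leq_trans (size_undup _)) // size_map -cardE. Qed.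

End EFX.

Definition g1 : good := @Ordinal 4 0 isT.
Definition g2 : good := @Ordinal 4 1 isT.
Definition g3 : good := @Ordinal 4 2 isT.
Definition g4 : good := @Ordinal 4 3 isT.

Lemma k_value_good (R : realFieldType) (f : good -> R) : k_value 4 f.
Proof. by have := k_value_card f; rewrite card_ord. Qed.

Lemma sum_good (R : realFieldType) (F : good -> R) :
  \sum_(g : good) F g = F g1 + F g2 + F g3 + F g4.
Proof.
rewrite !big_ord_recl big_ord0 addr0 !addrA.
by congr (F _ + F _ + F _ + F _); apply: val_inj.
Qed.

Lemma val_good (R : realFieldType) (f : good -> R) S :
  Defs.val f S = (if g1 \in S then f g1 else 0) + (if g2 \in S then f g2 else 0)
          + (if g3 \in S then f g3 else 0) + (if g4 \in S then f g4 else 0).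
Proof. by rewrite /Defs.val big_mkcond sum_good. Qed.

Lemma good_le1 (g : good) : (g <= 1)%N -> g = g1 \/ g = g2.
Proof. by case: g => [[|[|k]] k_lt] // _; [left | right]; apply: val_inj. Qed.

Lemma agent_cases (c c' : agent) : c' = c \/ c' = rev_ord c.
Proof.
by case: c c' => [[|[|k]] ?] // [[|[|k']] ?] //; [left|right|right|left]; apply: val_inj.
Qed.

Lemma rev_agent_neq (c : agent) : (rev_ord c == c) = false.
Proof. by case: c => [[|[|k]] ?]. Qed.

Lemma agent_neq_rev (c : agent) : (c == rev_ord c) = false.
Proof. by rewrite eq_sym rev_agent_neq. Qed.

Definition assigned (f : good -> agent) (i : agent) : {set good} := [set g | f g == i].

Section Adversary.
Variables (R : realFieldType) (a eta : R).

Definition aEFX_guarantee : Prop :=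
  exists alg : online_alg R, causal alg /\
    forall p v : agent -> good -> R, admissible eta p v -> aEFX a v (alloc alg p v).

Lemma no_aEFX_guarantee_of_adversary (p : agent -> good -> R)
    (V : agent -> agent -> agent -> good -> R) :
  (forall c1 c2 c1' c2' i, V c1 c2 i g1 = V c1' c2' i g1) ->
  (forall c1 c2 c2' i, V c1 c2 i g2 = V c1 c2' i g2) ->
  (forall c1 c2, admissible eta p (V c1 c2)) ->
  (forall f : good -> agent, ~ aEFX a (V (f g1) (f g2)) (assigned f)) ->
  ~ aEFX_guarantee.
Proof.
move=> V_g1 V_g2 V_adm V_fail [alg [alg_causal alg_aEFX]].
pose c1 := alg p g1 (V ord0 ord0); pose c2 := alg p g2 (V c1 ord0); pose v := V c1 c2.
have alg_g1 : alg p g1 v = c1.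
  apply: alg_causal => i g; rewrite leqn0 => /eqP g_eq0.
  have -> : g = g1 by apply: val_inj.
  exact: V_g1.
have alg_g2 : alg p g2 v = c2.
  by apply: alg_causal => i g /good_le1 [] ->; [exact: V_g1 | exact: V_g2].
apply: (V_fail (fun g => alg p g v)); rewrite alg_g1 alg_g2.
exact: alg_aEFX (V_adm c1 c2).
Qed.

(* [adv o s] is the valuation of an agent that received g1 iff [o], when g2
   went to the receiver of g1 iff [s]. *)
Definition adversary_profile (adv : bool -> bool -> good -> R) (c1 c2 i : agent)
  : good -> R := adv (i == c1) (c2 == c1).

Lemma admissible_profile (p : good -> R) adv :
  normalized p ->
  (forall o s, normalized (adv o s) /\ error p (adv o s) <= 1 - eta) ->
  forall c1 c2, admissible eta (fun=> p) (adversary_profile adv c1 c2).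
Proof.
move=> p_norm adv_ok c1 c2 i; have [v_norm v_err] := adv_ok (i == c1) (c2 == c1).
by split => //; exact: k_value_good.
Qed.

End Adversary.

Definition on_goods (R : Type) (x1 x2 x3 x4 : R) (g : good) : R :=
  match nat_of_ord g with 0 => x1 | 1 => x2 | 2 => x3 | _ => x4 end.

Section OnGoods.
Variable R : realFieldType.

Lemma normalized_on_goods (x1 x2 x3 x4 : R) :
  0 <= x1 -> 0 <= x2 -> 0 <= x3 -> 0 <= x4 -> x1 + x2 + x3 + x4 = 1 ->
  normalized (on_goods x1 x2 x3 x4).
Proof.
by move=> *; split; [case=> [[|[|[|[|k]]]] ?] | rewrite sum_good].
Qed.

Lemma error_on_goods (p1 p2 p3 p4 v1 v2 v3 v4 : R) :
  error (on_goods p1 p2 p3 p4) (on_goods v1 v2 v3 v4)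
  = 2^-1 * (`|p1 - v1| + `|p2 - v2| + `|p3 - v3| + `|p4 - v4|).
Proof. by rewrite /error sum_good. Qed.

End OnGoods.

Ltac drop_norms :=
  repeat match goal with |- context[`|?t|] =>
    first [rewrite (@ger0_norm _ t); last lra | rewrite (@ler0_norm _ t); last lra]
  end.

(* With c the receiver of g1: if the other agent holds g4 and another good,
   c violates the ratio against the other's bundle minus its earliest good;
   otherwise the other agent does, against c's bundle minus g1. *)
Ltac refute_assignments close :=
  let f := fresh "f" in let c := fresh "c" in
  intros f; remember (f g1) as c eqn:Ec;
  destruct (agent_cases c (f g2)) as [E2|E2];
  destruct (agent_cases c (f g3)) as [E3|E3];
  destruct (agent_cases c (f g4)) as [E4|E4];
  [ exists (rev_ord c), c, g1 | exists (rev_ord c), c, g1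
  | exists (rev_ord c), c, g1 | exists c, (rev_ord c), g3
  | exists (rev_ord c), c, g1 | exists c, (rev_ord c), g2
  | exists (rev_ord c), c, g1 | exists c, (rev_ord c), g2 ];
  rewrite /adversary_profile /assigned !val_good !inE -Ec E2 E3 E4
          !eqxx ?rev_agent_neq ?agent_neq_rev /=;
  split => //; close.

Section SmallA.
Variables (R : realFieldType) (d : R).

Definition small_a_valuation (owner same : bool) : good -> R :=
  on_goods (1/3 - 2 * d) (if owner then 1/6 else 1/6 + d)
           (if owner then 1/6 else if same then 1/6 + d else 1/6 - d)
           (if owner || ~~ same then 1/3 + 2 * d else 1/3).

Definition small_a_prediction : good -> R :=
  on_goods (1/3 - 2 * d) (1/6 + d) (1/6) (1/3 + d).

Lemma small_a_admissible (eta : R) :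
  1/12 <= d -> d <= 1/6 -> d <= 1 - eta -> forall o s,
  normalized (small_a_valuation o s) /\
  error small_a_prediction (small_a_valuation o s) <= 1 - eta.
Proof.
move=> d_ge d_le d_err [] [] /=; split;
  by [apply: normalized_on_goods; lra | rewrite error_on_goods; drop_norms; lra].
Qed.

Lemma small_a_EFX_ratio :
  1/12 <= d -> d <= 1/6 -> forall f : good -> agent,
  EFX_ratio_le (1 + 6 * d)^-1
    (adversary_profile small_a_valuation (f g1) (f g2)) (assigned f).
Proof.
move=> d_ge d_le.
refute_assignments ltac:(rewrite /small_a_valuation /on_goods /=;
  first [lra | rewrite ler_pdivlMl; [nra | lra]]).
Qed.

Lemma no_aEFX_guarantee_small_a (a eta : R) :
  1/12 <= d -> d <= 1/6 -> d <= 1 - eta -> 1 < a * (1 + 6 * d) ->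
  ~ aEFX_guarantee a eta.
Proof.
move=> d_ge d_le d_err a_gt.
apply: (no_aEFX_guarantee_of_adversary (p := fun=> small_a_prediction)
          (V := adversary_profile small_a_valuation)) => //.
- apply: admissible_profile; last exact: small_a_admissible.
  by apply: normalized_on_goods; lra.
- move=> f; apply: (not_aEFX_of_EFX_ratio_le (r := (1 + 6 * d)^-1)).
  + by rewrite invr_ge0; lra.
  + by rewrite -[X in X < _]mulr1 ltr_pdivrMl; lra.
  + exact: small_a_EFX_ratio.
Qed.

End SmallA.

Section LargeA.
Variables (R : realFieldType) (d : R).

Definition large_a_valuation (owner same : bool) : good -> R :=
  on_goods (1/6) (1/6)
           (if same && ~~ owner then 1/4 + d else 1/4 - d)
           (if same && ~~ owner then 5/12 - d else 5/12 + d).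

Definition large_a_prediction : good -> R := on_goods (1/6) (1/6) (1/4) (5/12).

Lemma large_a_admissible (eta : R) :
  0 < d -> d <= 1/12 -> d <= 1 - eta -> forall o s,
  normalized (large_a_valuation o s) /\
  error large_a_prediction (large_a_valuation o s) <= 1 - eta.
Proof.
move=> d_gt d_le d_err [] [] /=; split;
  by [apply: normalized_on_goods; lra | rewrite error_on_goods; drop_norms; lra].
Qed.

Lemma large_a_EFX_ratio :
  0 < d -> d <= 1/12 -> forall f : good -> agent,
  EFX_ratio_le (1 - 4 * d)
    (adversary_profile large_a_valuation (f g1) (f g2)) (assigned f).
Proof.
move=> d_gt d_le.
refute_assignments ltac:(rewrite /large_a_valuation /on_goods /=; nra).
Qed.

Lemma no_aEFX_guarantee_large_a (a eta : R) :
  0 < d -> d <= 1/12 -> d <= 1 - eta -> 1 - 4 * d < a ->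
  ~ aEFX_guarantee a eta.
Proof.
move=> d_gt d_le d_err a_gt.
apply: (no_aEFX_guarantee_of_adversary (p := fun=> large_a_prediction)
          (V := adversary_profile large_a_valuation)) => //.
- apply: admissible_profile; last exact: large_a_admissible.
  by apply: normalized_on_goods; lra.
- move=> f; apply: (not_aEFX_of_EFX_ratio_le (r := 1 - 4 * d)) => //; first lra.
  exact: large_a_EFX_ratio.
Qed.

End LargeA.

Theorem theorem4p5 (R : realFieldType) (a eta : R) :
  2^-1 < a -> a <= 1 ->
  eta < 1 - (1 - a) / Num.min (6 * a) 4 ->
  ~ exists alg : online_alg R,
      causal alg /\
      forall p v : agent -> good -> R,
        admissible eta p v -> aEFX a v (alloc alg p v).
Proof.
move=> a_gt a_le eta_lt.
case: (leP a (2/3)) => a_23.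
- rewrite min_l in eta_lt; last lra.
  have err_gt : 1 - a < (1 - eta) * (6 * a) by rewrite -ltr_pdivrMr; lra.
  case: (leP (1 - eta) (1/6)) => err_le.
  + by apply: (no_aEFX_guarantee_small_a (d := 1 - eta)); nra.
  + by apply: (no_aEFX_guarantee_small_a (d := 1/6)); lra.
- rewrite min_r in eta_lt; last lra.
  case: (leP (1 - eta) (1/12)) => err_le.
  + by apply: (no_aEFX_guarantee_large_a (d := 1 - eta)); lra.
  + by apply: (no_aEFX_guarantee_large_a (d := 1/12)); lra.
Qed.
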